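(* Let $a=\{a_1,\dots,a_m\}\subseteq\mathbb{Z}_{\ge 2}$. Then for every $n\ge0$, $$r(\mathcal{A}_n(a))=\sum_{i=0}^n\binom{n}{i}\,r(\widetilde{\mathcal{C}}_i)\,r(\widetilde{\mathcal{C}}_{n-i}).$$
   Context: For a set $a=\{a_1,\dots,a_m\}$ of integers $\ge2$ and $n\ge 1$, $\mathcal{A}_n(a)$ denotes the hyperplane arrangement in $\mathbb{R}^n$ consisting of the hyperplanes $x_i=0$ ($1\le i\le n$), $x_i=x_j$ ($1\le i<j\le n$), and $x_i=a_rx_j$ ($1\le i\neq j\le n$, $1\le r\le m$). $\widetilde{\mathcal{C}}_n$ denotes the arrangement in $\mathbb{R}^n$ consisting of the hyperplanes $x_i-x_j=0$ ($1\le i<j\le n$) and $x_i-x_j=\log a_r/\log a_1$ ($1\le i\neq j\le n$, $1\le r\le m$; for $r=1$ this is $x_i-x_j=1$). For $n=0$ both are empty arrangements in $\mathbb{R}^0$ with one region. $r(\mathcal{A})$ denotes the number of connected components of $\mathbb{R}^n\setminus\bigcup_{H\in\mathcal{A}}H$. *)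

From Stdlib Require Import Reals ClassicalEpsilon.
From mathcomp Require Import all_boot.

Set Implicit Arguments.
Unset Strict Implicit.
Unset Printing Implicit Defensive.
Local Open Scope R_scope.

Definition vec (n : nat) := 'I_n -> R.

(* Open subsets of R^n (sup-norm balls; same topology as Euclidean). *)
Definition is_open (n : nat) (U : vec n -> Prop) : Prop :=
  forall x, U x -> exists eps : R, (0 < eps) /\
    forall y : vec n, (forall i, (Rabs (y i - x i) < eps)) -> U y.

Definition is_connected (n : nat) (T : vec n -> Prop) : Prop :=
  forall U V : vec n -> Prop, is_open U -> is_open V ->
    (forall x, T x -> U x \/ V x) ->
    (forall x, T x -> U x -> V x -> False) ->
    (forall x, T x -> U x) \/ (forall x, T x -> V x).

Definition same_comp (n : nat) (S : vec n -> Prop) (x y : vec n) : Prop :=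
  exists T : vec n -> Prop, (forall z, T z -> S z) /\ is_connected T /\ T x /\ T y.

Definition has_ncomp (n : nat) (S : vec n -> Prop) (k : nat) : Prop :=
  exists f : vec n -> nat,
    (forall x, S x -> (f x < k)%N) /\
    (forall j, (j < k)%N -> exists x, S x /\ f x = j) /\
    (forall x y, S x -> S y -> (f x = f y <-> same_comp S x y)).

(* number of connected components (0 if not finite; never the case here) *)
Definition ncomp (n : nat) (S : vec n -> Prop) : nat :=
  epsilon (inhabits O) (fun k => has_ncomp S k).

Definition compl_A (a : seq nat) (n : nat) : vec n -> Prop := fun x =>
  (forall i, x i <> 0) /\
  (forall i j : 'I_n, (i < j)%N -> x i <> x j) /\
  (forall i j : 'I_n, i <> j -> forall r : nat, r \in a -> x i <> (INR r * x j)).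

(* Complement of the arrangement C~_n in R^n; a_1 = head of the list a. *)
Definition compl_C (a : seq nat) (n : nat) : vec n -> Prop := fun x =>
  (forall i j : 'I_n, (i < j)%N -> x i <> x j) /\
  (forall i j : 'I_n, i <> j -> forall r : nat, r \in a ->
     (x i - x j) <> (ln (INR r) / ln (INR (head O a)))).

Definition rA (a : seq nat) (n : nat) : nat := ncomp (@compl_A a n).
Definition rC (a : seq nat) (n : nat) : nat := ncomp (@compl_C a n).

From Stdlib Require Import Reals Lra ClassicalEpsilon FunctionalExtensionality.
From mathcomp Require Import all_boot.

Set Implicit Arguments.
Unset Strict Implicit.
Unset Printing Implicit Defensive.

(* The regions of an arrangement whose hyperplanes each involve at most two coordinates are its
   realised sign vectors: points with equal signs are joined by a segment inside the complement,
   and a hyperplane separates points with different signs by two disjoint open half-spaces.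
   The hyperplanes x_i = 0 sort the regions of A_n(a) by the set P of positive coordinates.
   On the orthant of sign P the change of coordinates x_i = a_1^(y_i) for i in P and
   x_i = -a_1^(y_i) otherwise turns x_i = a_r x_j, for i and j on the same side, into
   y_i - y_j = log a_r / log a_1, while x_i = a_r x_j with i and j on opposite sides misses the
   orthant. Hence the regions in that orthant correspond to pairs of regions of C~_|P| and
   C~_(n-|P|), and summing over P gives the binomial convolution. *)

(** * Counting regions by a complete invariant *)

Definition pbool (P : Prop) : bool := if excluded_middle_informative P then true else false.

Lemma pboolP (P : Prop) : reflect P (pbool P).
Proof. by rewrite /pbool; case: excluded_middle_informative => h; constructor. Qed.

Definition key_image (X : Type) (S : X -> Prop) (K : finType) (key : X -> K) : {set K} :=
  [set k | pbool (exists2 x, S x & key x = k)].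

Lemma key_imageP (X : Type) (S : X -> Prop) (K : finType) (key : X -> K) k :
  reflect (exists2 x, S x & key x = k) (k \in key_image S key).
Proof. by rewrite inE; apply: pboolP. Qed.

Lemma mem_key_image (X : Type) (S : X -> Prop) (K : finType) (key : X -> K) x :
  S x -> key x \in key_image S key.
Proof. by move=> Sx; apply/key_imageP; exists x. Qed.

Section KeyImage.

Variables (X : Type) (S : X -> Prop).

Lemma key_image_comp (K K' : finType) (key : X -> K) (F : K -> K') :
  key_image S (F \o key) = F @: key_image S key.
Proof.
apply/setP => k'; apply/key_imageP/imsetP => [[x Sx <-]|[k /key_imageP[x Sx <-] ->]].
  by exists (key x); first exact: mem_key_image.
by exists x.
Qed.

Lemma card_key_image_comp (K K' : finType) (key : X -> K) (F : K -> K') :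
  (forall x y, S x -> S y -> F (key x) = F (key y) -> key x = key y) ->
  #|key_image S (F \o key)| = #|key_image S key|.
Proof.
move=> Finj; rewrite key_image_comp; apply: card_in_imset.
by move=> _ _ /key_imageP[x Sx <-] /key_imageP[y Sy <-]; apply: Finj.
Qed.

Lemma card_key_image_equiv (K1 K2 : finType) (key1 : X -> K1) (key2 : X -> K2) :
  (forall x y, S x -> S y -> key1 x = key1 y <-> key2 x = key2 y) ->
  #|key_image S key1| = #|key_image S key2|.
Proof.
move=> equiv; pose key x := (key1 x, key2 x).
transitivity #|key_image S key|.
  apply: (@card_key_image_comp _ _ key fst) => x y Sx Sy /= E.
  by rewrite /key E (proj1 (equiv x y Sx Sy) E).
symmetry; apply: (@card_key_image_comp _ _ key snd) => x y Sx Sy /= E.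
by rewrite /key E (proj2 (equiv x y Sx Sy) E).
Qed.

Lemma key_image_transfer (Y : Type) (T : Y -> Prop) (g : X -> Y) (K : finType) (key : Y -> K) :
  (forall x, S x -> T (g x)) -> (forall y, T y -> exists2 x, S x & g x = y) ->
  key_image S (key \o g) = key_image T key.
Proof.
move=> STg gonto; apply/setP => k.
apply/key_imageP/key_imageP => [[x Sx <-]|[y /gonto[x Sx <-] <-]]; last by exists x.
by exists (g x); first exact: STg.
Qed.

Lemma card_key_image_partition (K Q : finType) (key : X -> K) (p : X -> Q) (pi : K -> Q) :
  (forall x, S x -> pi (key x) = p x) ->
  #|key_image S key| = (\sum_(q : Q) #|key_image (fun x => S x /\ p x = q) key|)%N.
Proof.
move=> pi_key; rewrite -sum1_card (partition_big pi predT) //=.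
apply: eq_bigr => q _; rewrite -sum1_card; apply: eq_bigl => k.
apply/andP/key_imageP => [[/key_imageP[x Sx <-] /eqP]|[x [Sx <-] <-]].
  by rewrite pi_key // => px; exists x.
by split; [apply: mem_key_image | rewrite pi_key].
Qed.

End KeyImage.

Lemma key_image_pair (Y1 Y2 : Type) (T1 : Y1 -> Prop) (T2 : Y2 -> Prop)
    (K1 K2 : finType) (key1 : Y1 -> K1) (key2 : Y2 -> K2) :
  key_image (fun z => T1 z.1 /\ T2 z.2) (fun z => (key1 z.1, key2 z.2)) =
  setX (key_image T1 key1) (key_image T2 key2).
Proof.
apply/setP => -[k1 k2]; rewrite in_setX /=.
apply/key_imageP/andP => [[[y1 y2] [T1y T2y] [<- <-]]|].
  by split; apply: mem_key_image.
by move=> [/key_imageP[y1 T1y <-] /key_imageP[y2 T2y <-]]; exists (y1, y2).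
Qed.

Lemma has_ncomp_le n (S : vec n -> Prop) k1 k2 :
  has_ncomp S k1 -> has_ncomp S k2 -> (k1 <= k2)%N.
Proof.
move=> [f1 [f1_lt [f1_onto f1_comp]]] [f2 [f2_lt [_ f2_comp]]].
have rep (j : 'I_k1) : {x | S x /\ f1 x = j}.
  by apply: constructive_indefinite_description; apply: f1_onto.
pose h (j : 'I_k1) : 'I_k2 := Ordinal (f2_lt _ (proj1 (proj2_sig (rep j)))).
have h_inj : injective h.
  move=> i j /(congr1 val) /=.
  case: (rep i) => xi [Sxi fxi]; case: (rep j) => xj [Sxj fxj] /= E.
  by apply: val_inj; rewrite /= -fxi -fxj; apply/(f1_comp _ _ Sxi Sxj)/(f2_comp _ _ Sxi Sxj).
by have := leq_card h h_inj; rewrite !card_ord.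
Qed.

Lemma ncomp_eq n (S : vec n -> Prop) k : has_ncomp S k -> ncomp S = k.
Proof.
move=> Sk; have Sk' := epsilon_spec (inhabits O) (fun k => has_ncomp S k) (ex_intro _ k Sk).
by apply/eqP; rewrite eqn_leq (has_ncomp_le Sk Sk') (has_ncomp_le Sk' Sk).
Qed.

Lemma ncomp_key_image n (S : vec n -> Prop) (K : finType) (key : vec n -> K) :
  (forall x y, S x -> S y -> key x = key y <-> same_comp S x y) ->
  ncomp S = #|key_image S key|.
Proof.
move=> key_comp; apply: ncomp_eq; set I := key_image S key.
exists (fun x => index (key x) (enum I)); split; [|split].
- by move=> x Sx; rewrite cardE index_mem mem_enum mem_key_image.
- move=> j j_lt; have : enum_val (Ordinal j_lt) \in I by apply: enum_valP.
  move=> /key_imageP[x Sx Ex]; exists x; split => //.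
  by rewrite Ex (enum_val_nth (key x)) index_uniq ?enum_uniq // -cardE.
- move=> x y Sx Sy; rewrite -key_comp //; split => [E|-> //].
  have memI z : S z -> key z \in enum I by rewrite mem_enum; apply: mem_key_image.
  by rewrite -(nth_index (key x) (memI x Sx)) E (nth_index _ (memI y Sy)).
Qed.

Local Open Scope R_scope.

Lemma vec_bound n (d : vec n) : exists2 M, 0 <= M & forall i, Rabs (d i) <= M.
Proof.
suff [M M0 HM] : exists2 M, 0 <= M & forall i, i \in enum 'I_n -> Rabs (d i) <= M.
  by exists M => // i; apply: HM; rewrite mem_enum.
elim: (enum 'I_n) => [|j s [M M0 HM]]; first by exists 0 => [|i]; [lra | rewrite in_nil].
exists (Rmax (Rabs (d j)) M) => [|i]; first exact: Rle_trans (Rmax_r _ _).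
rewrite in_cons => /orP[/eqP -> | i_s]; first exact: Rmax_l.
exact: Rle_trans (HM i i_s) (Rmax_r _ _).
Qed.

Definition seg n (x y : vec n) (s : R) : vec n := fun i => x i + s * (y i - x i).

Definition segment n (x y : vec n) : vec n -> Prop :=
  fun z => exists2 s, 0 <= s <= 1 & z = seg x y s.

Lemma seg0 n (x y : vec n) : seg x y 0 = x.
Proof. by apply: functional_extensionality => i; rewrite /seg; ring. Qed.

Lemma segment_start n (x y : vec n) : segment x y x.
Proof. by exists 0; [lra | rewrite seg0]. Qed.

Lemma segment_end n (x y : vec n) : segment x y y.
Proof. by exists 1; [lra | apply: functional_extensionality => i; rewrite /seg; ring]. Qed.

Definition clamp (s : R) : R := Rmax 0 (Rmin 1 s).

Ltac unfold_clamp :=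
  rewrite /clamp /Rmax /Rmin;
  repeat match goal with
  | |- context [Rle_dec ?a ?b] => destruct (Rle_dec a b)
  | H : context [Rle_dec ?a ?b] |- _ => destruct (Rle_dec a b)
  end;
  repeat match goal with H : ~ (_ <= _) |- _ => apply Rnot_le_lt in H end.

Lemma clamp_lipschitz s t : Rabs (clamp s - clamp t) <= Rabs (s - t).
Proof. by unfold_clamp; split_Rabs; lra. Qed.

Lemma clamp_range s : 0 <= clamp s <= 1.
Proof. by unfold_clamp; lra. Qed.

Lemma clamp_id s : 0 <= s <= 1 -> clamp s = s.
Proof. by move=> ?; unfold_clamp; lra. Qed.

Lemma seg_clamp_close n (x y : vec n) M s t e :
  0 <= M -> (forall i, Rabs (y i - x i) <= M) -> 0 < e -> Rabs (s - t) < e / (M + 1) ->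
  forall i, Rabs (seg x y (clamp s) i - seg x y (clamp t) i) < e.
Proof.
move=> M0 HM e0 st i.
have -> : seg x y (clamp s) i - seg x y (clamp t) i = (clamp s - clamp t) * (y i - x i).
  by rewrite /seg; ring.
rewrite Rabs_mult.
have st' : Rabs (s - t) * (M + 1) < e.
  have := Rmult_lt_compat_r (M + 1) _ _ ltac:(lra) st.
  by rewrite /Rdiv Rmult_assoc Rinv_l; lra.
have := clamp_lipschitz s t; have := HM i.
have := Rabs_pos (clamp s - clamp t); have := Rabs_pos (y i - x i); have := Rabs_pos (s - t).
nra.
Qed.

(* If the segment split into U and V, the indicator of U along the clamped parametrisation would
   be a continuous function R -> {-1/2, 1/2} changing sign, contradicting the IVT. *)
Lemma segment_in_open n (x y : vec n) (U V : vec n -> Prop) :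
  is_open U -> is_open V ->
  (forall z, segment x y z -> U z \/ V z) ->
  (forall z, segment x y z -> U z -> V z -> False) ->
  U x -> forall z, segment x y z -> U z.
Proof.
move=> openU openV cover disj Ux z [s1 s1_01 ->].
case: (excluded_middle_informative (U (seg x y s1))) => // nU; exfalso.
pose c s := if excluded_middle_informative (U (seg x y (clamp s))) then -1/2 else 1/2.
have [M M0 HM] := vec_bound (fun i => y i - x i).
have seg_clamp s : segment x y (seg x y (clamp s)) by exists (clamp s); first exact: clamp_range.
have c_cont : continuity c.
  move=> t eps eps0; rewrite /c.
  case: excluded_middle_informative => [Ut | nUt].
  - have [e [e0 He]] := openU _ Ut.
    exists (e / (M + 1)); split; first by apply: Rdiv_lt_0_compat; lra.
    move=> s [_ st]; rewrite /= /R_dist in st *.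
    have Us : U (seg x y (clamp s)) by apply: He => i; apply: (seg_clamp_close M0 HM e0 st).
    by case: excluded_middle_informative => // Us' /=; rewrite Rminus_diag Rabs_R0.
  - have Vt : V (seg x y (clamp t)) by case: (cover _ (seg_clamp t)).
    have [e [e0 He]] := openV _ Vt.
    exists (e / (M + 1)); split; first by apply: Rdiv_lt_0_compat; lra.
    move=> s [_ st]; rewrite /= /R_dist in st *.
    have Vs : V (seg x y (clamp s)) by apply: He => i; apply: (seg_clamp_close M0 HM e0 st).
    case: excluded_middle_informative => [Us | nUs] /=; first by case: (disj _ (seg_clamp s) Us Vs).
    by rewrite Rminus_diag Rabs_R0.
have s1_pos : 0 < s1.
  by case: (Rle_lt_or_eq_dec 0 s1 (proj1 s1_01)) => // s1E; rewrite -s1E seg0 in nU.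
have c0 : c 0 < 0.
  by rewrite /c clamp_id ?seg0; [case: excluded_middle_informative => //=; lra | lra].
have c1 : 0 < c s1.
  by rewrite /c clamp_id //; case: excluded_middle_informative => //= nU1; lra.
have [w [_ cw]] := IVT c 0 s1 c_cont s1_pos c0 c1.
by move: cw; rewrite /c; case: excluded_middle_informative => Uw /=; lra.
Qed.

Lemma segment_connected n (x y : vec n) : is_connected (segment x y).
Proof.
move=> U V openU openV cover disj.
have [Ux | Vx] := cover x (segment_start x y).
  by left; apply: (segment_in_open openU openV).
right; apply: (segment_in_open openV openU) => //.
  by move=> z /cover; tauto.
by move=> z Sz Vz Uz; apply: (disj z Sz Uz Vz).
Qed.

(** * Regions of arrangements of two-coordinate hyperplanes *)

Definition affine2 n (f : vec n -> R) : Prop :=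
  exists (i j : 'I_n) (c1 c2 c0 : R), forall x, f x = c1 * x i + c2 * x j + c0.

Lemma affine2_opp n (f : vec n -> R) : affine2 f -> affine2 (fun x => - f x).
Proof.
by move=> [i [j [c1 [c2 [c0 fE]]]]]; exists i, j, (- c1), (- c2), (- c0) => x; rewrite fE; ring.
Qed.

Lemma affine2_seg n (f : vec n -> R) x y s :
  affine2 f -> f (seg x y s) = (1 - s) * f x + s * f y.
Proof. by move=> [i [j [c1 [c2 [c0 fE]]]]]; rewrite !fE /seg; ring. Qed.

Lemma open_affine2_neg n (f : vec n -> R) : affine2 f -> is_open (fun z => f z < 0).
Proof.
move=> [i [j [c1 [c2 [c0 fE]]]]] x fx.
have C0 : 0 < Rabs c1 + Rabs c2 + 1 by have := Rabs_pos c1; have := Rabs_pos c2; lra.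
exists (- f x / (Rabs c1 + Rabs c2 + 1)); split; first by apply: Rdiv_lt_0_compat; lra.
move=> y near_y; set eps := - f x / _ in near_y.
have epsE : eps * (Rabs c1 + Rabs c2 + 1) = - f x by rewrite /eps; field; lra.
have -> : f y = f x + c1 * (y i - x i) + c2 * (y j - x j) by rewrite !fE; ring.
have := Rle_abs (c1 * (y i - x i)); have := Rle_abs (c2 * (y j - x j)); rewrite !Rabs_mult.
have eps0 : 0 < eps by rewrite /eps; apply: Rdiv_lt_0_compat; lra.
have := Rmult_le_compat_l _ _ _ (Rabs_pos c1) (Rlt_le _ _ (near_y i)).
have := Rmult_le_compat_l _ _ _ (Rabs_pos c2) (Rlt_le _ _ (near_y j)).
lra.
Qed.

Definition Rltb (u v : R) : bool := if Rlt_dec u v then true else false.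

Lemma RltbP u v : reflect (u < v) (Rltb u v).
Proof. by rewrite /Rltb; case: Rlt_dec => h; constructor. Qed.

Definition sign_key n (F : finType) (g : F -> vec n -> R) (x : vec n) : {ffun F -> bool} :=
  [ffun k => Rltb (g k x) 0].

Lemma sign_key_same_comp n (F : finType) (g : F -> vec n -> R) (S : vec n -> Prop) :
  (forall k, affine2 (g k)) -> (forall x, S x <-> forall k, g k x <> 0) ->
  forall x y, S x -> S y -> sign_key g x = sign_key g y <-> same_comp S x y.
Proof.
move=> g_aff SE x y Sx Sy; split => [xy | [T [TS [T_conn [Tx Ty]]]]].
  exists (segment x y); split; [|split; [exact: segment_connected | split]].
  - move=> _ [s s01 ->]; apply/SE => k; rewrite affine2_seg //.
    have := congr1 (fun key : {ffun F -> bool} => key k) xy; rewrite !ffunE.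
    have := proj1 (SE x) Sx k; have := proj1 (SE y) Sy k.
    by case: (RltbP (g k x) 0); case: (RltbP (g k y) 0) => // *; nra.
  - exact: segment_start.
  - exact: segment_end.
apply/ffunP => k; rewrite !ffunE.
have := T_conn _ _ (open_affine2_neg (g_aff k)) (open_affine2_neg (affine2_opp (g_aff k))).
have gT z : T z -> g k z <> 0 by move=> Tz; apply: (proj1 (SE z) (TS z Tz)).
case.
- by move=> z /gT; lra.
- by move=> z _; lra.
- by move=> neg; rewrite !(introT (RltbP _ _)) //; apply: neg.
- move=> pos; have := pos x Tx; have := pos y Ty.
  by case: (RltbP (g k x) 0); case: (RltbP (g k y) 0) => // *; lra.
Qed.

Definition lna1 (a : seq nat) : R := ln (INR (head O a)).

(* [ratio a 0 = 1] accounts for the hyperplanes x_i = x_j, and [ratio a k.+1] is a_(k+1). *)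
Definition ratio (a : seq nat) (k : nat) : R := INR (nth 1%N (1%N :: a) k).

Definition log_ratio (a : seq nat) (k : nat) : R := ln (ratio a k) / lna1 a.

Lemma log_ratio0 a : log_ratio a 0 = 0.
Proof. by rewrite /log_ratio /ratio /= ln_1 /Rdiv Rmult_0_l. Qed.

(* Forms indexed by (i, j, k); the pairs i = j carry the nonvanishing dummy form 1. *)
Definition FC (a : seq nat) (m : nat) : finType := ('I_m * 'I_m * 'I_(size a).+1)%type.

Definition formC (a : seq nat) (m : nat) (t : FC a m) (y : vec m) : R :=
  let: (i, j, k) := t in if i == j then 1 else y i - y j - log_ratio a k.

Definition FA (a : seq nat) (n : nat) : finType := ('I_n + FC a n)%type.

Definition formA (a : seq nat) (n : nat) (t : FA a n) (x : vec n) : R :=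
  match t with
  | inl i => x i
  | inr (i, j, k) => if i == j then 1 else x i - ratio a k * x j
  end.

Definition keyC (a : seq nat) (m : nat) := sign_key (@formC a m).
Definition keyA (a : seq nat) (n : nat) := sign_key (@formA a n).
Arguments keyC a m x : clear implicits.
Arguments keyA a n x : clear implicits.

Lemma formC_affine2 a m (t : FC a m) : affine2 (formC t).
Proof.
case: t => [[i j] k]; exists i, j; rewrite /formC.
by case: eqP => _; [exists 0, 0, 1 | exists 1, (-1), (- log_ratio a k)] => y; ring.
Qed.

Lemma formA_affine2 a n (t : FA a n) : affine2 (formA t).
Proof.
case: t => [i | [[i j] k]]; first by exists i, i, 1, 0, 0 => x /=; ring.
exists i, j; rewrite /formA.
by case: eqP => _; [exists 0, 0, 1 | exists 1, (- ratio a k), 0] => x; ring.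
Qed.

Lemma ord_lt_neq n (i j : 'I_n) : (i < j)%N -> i != j.
Proof. by move=> ij; apply/eqP => E; rewrite E ltnn in ij. Qed.

Lemma index_ord (a : seq nat) r : r \in a -> ((index r a).+1 < (size a).+1)%N.
Proof. by rewrite ltnS index_mem. Qed.

Lemma ratio_index a r : r \in a -> ratio a (index r a).+1 = INR r.
Proof. by move=> ra; rewrite /ratio /= nth_index. Qed.

Lemma compl_C_forms a m y : @compl_C a m y <-> forall t : FC a m, formC t y <> 0.
Proof.
split => [[neq ratio_neq] [[i j] k] | nz].
  rewrite /formC; case: eqP => [_ | /eqP ij]; first lra.
  case: k => [[|k] k_lt].
    rewrite log_ratio0; case: (ltngtP i j) => [/neq | /neq | /val_inj E]; [lra | lra |].
    by rewrite E eqxx in ij.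
  have := ratio_neq i j (elimN eqP ij) _ (mem_nth 1%N (k_lt : (k < size a)%N)).
  by rewrite /log_ratio /ratio /lna1 /=; lra.
split => [i j /ord_lt_neq ij E | i j /eqP ij r ra E].
  by have := nz (i, j, ord0); rewrite /formC (negbTE ij) log_ratio0; lra.
have := nz (i, j, Ordinal (index_ord ra)); rewrite /formC (negbTE ij).
by rewrite /log_ratio ratio_index // /lna1; lra.
Qed.

Lemma compl_A_forms a n x : @compl_A a n x <-> forall t : FA a n, formA t x <> 0.
Proof.
split => [[nz0 [neq ratio_neq]] [i | [[i j] k]] | nz] /=; first exact: nz0.
  case: eqP => [_ | /eqP ij]; first lra.
  case: k => [[|k] k_lt].
    rewrite /ratio /=; case: (ltngtP i j) => [/neq | /neq | /val_inj E]; [lra | lra |].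
    by rewrite E eqxx in ij.
  have := ratio_neq i j (elimN eqP ij) _ (mem_nth 1%N (k_lt : (k < size a)%N)).
  by rewrite /ratio /=; lra.
split; [| split] => [i | i j /ord_lt_neq ij E | i j /eqP ij r ra E]; first exact: (nz (inl i)).
  by have := nz (inr (i, j, ord0)); rewrite /= (negbTE ij) /ratio /=; lra.
have := nz (inr (i, j, Ordinal (index_ord ra))); rewrite /= (negbTE ij) ratio_index //.
lra.
Qed.

Lemma rC_key_image a m : rC a m = #|key_image (@compl_C a m) (keyC a m)|.
Proof.
apply: ncomp_key_image => x y Sx Sy; apply: sign_key_same_comp => //.
  exact: formC_affine2.
exact: compl_C_forms.
Qed.

Lemma rA_key_image a n : rA a n = #|key_image (@compl_A a n) (keyA a n)|.
Proof.
apply: ncomp_key_image => x y Sx Sy; apply: sign_key_same_comp => //.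
  exact: formA_affine2.
exact: compl_A_forms.
Qed.

(** * Logarithmic coordinates on an orthant *)

Definition same_sign (u v : R) : Prop := (u < 0 <-> v < 0) /\ (0 < u <-> 0 < v).

Lemma same_sign_refl u : same_sign u u.
Proof. by split. Qed.

Lemma same_sign_neq0 u v : same_sign u v -> u <> 0 <-> v <> 0.
Proof.
move=> [[uv vu] [uv' vu']]; split => nz E; rewrite E in uv uv' vu vu'.
  by case: (Rtotal_order u 0) => [/uv | [// | /uv']]; lra.
by case: (Rtotal_order v 0) => [/vu | [// | /vu']]; lra.
Qed.

Lemma same_sign_Rltb u v : same_sign u v -> Rltb u 0 = Rltb v 0.
Proof. by move=> [[uv vu] _]; apply/RltbP/RltbP. Qed.

Lemma Rltb_opp u : u <> 0 -> Rltb (- u) 0 = ~~ Rltb u 0.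
Proof. by move=> nz; case: (RltbP u 0); case: (RltbP (- u) 0) => // *; lra. Qed.

Lemma same_sign_sym u v : same_sign u v -> same_sign v u.
Proof. by move=> [[? ?] [? ?]]; split; split. Qed.

Lemma same_sign_trans u v w : same_sign u v -> same_sign v w -> same_sign u w.
Proof. by move=> [[? ?] [? ?]] [[? ?] [? ?]]; split; split; auto. Qed.

Lemma same_sign_scale d c : 0 < c -> same_sign (d * c) d.
Proof. by move=> c_gt0; split; split => h; nra. Qed.

Lemma same_sign_opp u v : same_sign u v -> same_sign (- u) (- v).
Proof.
move=> [[uv vu] [uv' vu']]; split; split => h;
  [have := uv' ltac:(lra) | have := vu' ltac:(lra) | have := uv ltac:(lra) | have := vu ltac:(lra)];
  lra.
Qed.

Lemma same_sign_log x1 x2 t L : 0 < x1 -> 0 < x2 -> 0 < t -> 0 < L ->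
  same_sign (x1 - t * x2) (ln x1 / L - ln x2 / L - ln t / L).
Proof.
move=> x1_gt0 x2_gt0 t_gt0 L_gt0; have tx2_gt0 : 0 < t * x2 by nra.
have -> : ln x1 / L - ln x2 / L - ln t / L = (ln x1 - ln (t * x2)) * / L.
  by rewrite ln_mult //; field; lra.
apply: same_sign_trans (same_sign_sym (same_sign_scale _ (Rinv_0_lt_compat L L_gt0))).
split; split => h.
- by have := ln_increasing x1 (t * x2) x1_gt0 ltac:(lra); lra.
- by have := ln_lt_inv x1 (t * x2) x1_gt0 tx2_gt0 ltac:(lra); lra.
- by have := ln_increasing (t * x2) x1 tx2_gt0 ltac:(lra); lra.
- by have := ln_lt_inv (t * x2) x1 tx2_gt0 x1_gt0 ltac:(lra); lra.
Qed.

Lemma enum_val_onto (T : finType) (A : {set T}) i : i \in A -> exists l, enum_val (A := A) l = i.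
Proof. by move=> iA; exists (enum_rank_in iA i); apply: enum_rankK_in. Qed.

Lemma enum_val_onto_compl (T : finType) (A : {set T}) i :
  i \notin A -> exists l, enum_val (A := ~: A) l = i.
Proof. by move=> iA; apply: enum_val_onto; rewrite inE. Qed.

Definition has_signs n (P : {set 'I_n}) (x : vec n) : Prop :=
  forall i, if i \in P then 0 < x i else x i < 0.

Definition pos_set n (x : vec n) : {set 'I_n} := [set i | Rltb 0 (x i)].

Lemma pos_set_signs n (P : {set 'I_n}) (x : vec n) :
  (forall i, x i <> 0) -> pos_set x = P <-> has_signs P x.
Proof.
move=> nz; split => [<- i | sgn].
  by rewrite inE; case: RltbP => // ?; have := nz i; lra.
apply/setP => i; rewrite inE; have := sgn i.
by case: (i \in P); case: RltbP => // *; lra.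
Qed.

Section LogCoordinates.

Variable a : seq nat.
Hypothesis a_neq0 : a <> [::].
Hypothesis a_ge2 : all (fun r => 2 <= r)%N a.

Lemma lna1_gt0 : 0 < lna1 a.
Proof.
case: a a_neq0 a_ge2 => [// | r a'] _ /= /andP[r_ge2 _].
rewrite /lna1 /= -ln_1; apply: ln_increasing; first lra.
have := le_INR 2 r (elimT leP r_ge2); rewrite /=; lra.
Qed.

Lemma ratio_gt0 k : 0 < ratio a k.
Proof.
rewrite /ratio; apply: lt_0_INR; apply/ltP.
case: k => [// | k] /=; case: (ltnP k (size a)) => [k_lt | k_ge]; last by rewrite nth_default.
by apply: leq_trans (all_nthP 1%N a_ge2 k k_lt).
Qed.

Variables (n : nat) (P : {set 'I_n}).

Definition log_pos (x : vec n) : vec #|P| := fun l => ln (x (enum_val l)) / lna1 a.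
Definition log_neg (x : vec n) : vec #|~: P| := fun l => ln (- x (enum_val l)) / lna1 a.

Definition exp_coords (u : vec #|P|) (v : vec #|~: P|) : vec n := fun i =>
  match [pick l | enum_val l == i], [pick l | enum_val l == i] with
  | Some l, _ => exp (u l * lna1 a)
  | None, Some l => - exp (v l * lna1 a)
  | None, None => 0
  end.

Lemma exp_coords_pos u v l : exp_coords u v (enum_val l) = exp (u l * lna1 a).
Proof.
rewrite /exp_coords; case: pickP => [l' /eqP/enum_val_inj -> // | nopick].
by have := nopick l; rewrite eqxx.
Qed.

Lemma exp_coords_neg u v (l : 'I_#|~: P|) : exp_coords u v (enum_val l) = - exp (v l * lna1 a).
Proof.
rewrite /exp_coords; case: pickP => [l' /eqP E | _].
  by have := enum_valP l; rewrite -E inE enum_valP.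
case: pickP => [l' /eqP/enum_val_inj -> // | nopick].
by have := nopick l; rewrite eqxx.
Qed.

Lemma has_signs_exp_coords u v : has_signs P (exp_coords u v).
Proof.
move=> i; case: ifP => iP.
  by have [l <-] := enum_val_onto iP; rewrite exp_coords_pos; apply: exp_pos.
have [l <-] := enum_val_onto_compl (negbT iP).
by rewrite exp_coords_neg; have := exp_pos (v l * lna1 a); lra.
Qed.

Lemma log_pos_exp_coords u v : log_pos (exp_coords u v) = u.
Proof.
apply: functional_extensionality => l; have := lna1_gt0.
by rewrite /log_pos exp_coords_pos ln_exp => ?; field; lra.
Qed.

Lemma log_neg_exp_coords u v : log_neg (exp_coords u v) = v.
Proof.
apply: functional_extensionality => l; have := lna1_gt0.
by rewrite /log_neg exp_coords_neg Ropp_involutive ln_exp => ?; field; lra.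
Qed.

Lemma signs_pos x (l : 'I_#|P|) : has_signs P x -> 0 < x (enum_val l).
Proof. by move=> /(_ (enum_val l)); rewrite enum_valP. Qed.

Lemma signs_neg x (l : 'I_#|~: P|) : has_signs P x -> x (enum_val l) < 0.
Proof. by move=> /(_ (enum_val l)); have := enum_valP l; rewrite inE => /negbTE ->. Qed.

Lemma formA_pos_same_sign x (l1 l2 : 'I_#|P|) k : has_signs P x ->
  same_sign (formA (inr (enum_val l1, enum_val l2, k) : FA a n) x)
            (formC ((l1, l2, k) : FC a #|P|) (log_pos x)).
Proof.
move=> sx; rewrite /= (inj_eq enum_val_inj); case: eqP => _; first exact: same_sign_refl.
exact: same_sign_log (signs_pos l1 sx) (signs_pos l2 sx) (ratio_gt0 k) lna1_gt0.
Qed.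

Lemma formA_neg_same_sign x (l1 l2 : 'I_#|~: P|) k : has_signs P x -> l1 != l2 ->
  same_sign (formA (inr (enum_val l1, enum_val l2, k) : FA a n) x)
            (- formC ((l1, l2, k) : FC a #|~: P|) (log_neg x)).
Proof.
move=> sx l12; rewrite /= (inj_eq enum_val_inj) (negbTE l12).
have -> : x (enum_val l1) - ratio a k * x (enum_val l2) =
          - (- x (enum_val l1) - ratio a k * - x (enum_val l2)) by ring.
apply: same_sign_opp; have := signs_neg l1 sx; have := signs_neg l2 sx => x2_lt0 x1_lt0.
rewrite /log_neg /log_ratio.
by apply: same_sign_log; [lra | lra | exact: ratio_gt0 | exact: lna1_gt0].
Qed.

Lemma formA_mixed x i j k : has_signs P x -> i \in P -> j \notin P ->
  0 < formA (inr (i, j, k) : FA a n) x /\ formA (inr (j, i, k) : FA a n) x < 0.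
Proof.
move=> sx iP jP; have := sx i; have := sx j; rewrite iP (negbTE jP) /= => xj xi.
have ij : (i == j) = false by apply: contraNF jP => /eqP <-.
by rewrite ij eq_sym ij; have := ratio_gt0 k; split; nra.
Qed.

Lemma compl_A_log x : has_signs P x ->
  @compl_A a n x <-> @compl_C a #|P| (log_pos x) /\ @compl_C a #|~: P| (log_neg x).
Proof.
move=> sx; rewrite compl_A_forms !compl_C_forms; split => [nzA | [nzC1 nzC2]].
  split => -[[l1 l2] k].
    by apply/(same_sign_neq0 (formA_pos_same_sign l1 l2 k sx)).
  have [-> | l12] := eqVneq l1 l2; first by rewrite /= eqxx; lra.
  move: (nzA (inr (enum_val l1, enum_val l2, k))).
  by move=> /(same_sign_neq0 (formA_neg_same_sign k sx l12)) nz E; apply: nz; rewrite E; lra.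
case=> [i | [[i j] k]]; first by rewrite /=; have := sx i; case: (i \in P); lra.
case: (boolP (i \in P)) => iP; case: (boolP (j \in P)) => jP.
- have [l1 <-] := enum_val_onto iP; have [l2 <-] := enum_val_onto jP.
  by apply/(same_sign_neq0 (formA_pos_same_sign l1 l2 k sx)).
- by apply: Rgt_not_eq; case: (formA_mixed k sx iP jP).
- by apply: Rlt_not_eq; case: (formA_mixed k sx jP iP).
- have [l1 <-] := enum_val_onto_compl iP; have [l2 <-] := enum_val_onto_compl jP.
  have [-> | l12] := eqVneq l1 l2; first by rewrite /= eqxx; lra.
  apply/(same_sign_neq0 (formA_neg_same_sign k sx l12)).
  by move=> /Ropp_eq_0_compat; rewrite Ropp_involutive; apply: nzC2.
Qed.

Definition sign_region (x : vec n) : Prop := @compl_A a n x /\ pos_set x = P.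

Lemma sign_region_signs x : sign_region x -> has_signs P x.
Proof. by case=> [[nz _] xP]; apply/(pos_set_signs P nz). Qed.

Lemma keyA_pos x (l1 l2 : 'I_#|P|) k : has_signs P x ->
  keyA a n x (inr (enum_val l1, enum_val l2, k)) = keyC a #|P| (log_pos x) (l1, l2, k).
Proof. by move=> sx; rewrite !ffunE; apply/same_sign_Rltb/formA_pos_same_sign. Qed.

Lemma keyA_neg x (l1 l2 : 'I_#|~: P|) k : sign_region x -> l1 != l2 ->
  keyA a n x (inr (enum_val l1, enum_val l2, k)) = ~~ keyC a #|~: P| (log_neg x) (l1, l2, k).
Proof.
move=> Sx l12; have sx := sign_region_signs Sx.
have [_ /compl_C_forms nzC] := proj1 (compl_A_log sx) (proj1 Sx).
by rewrite !ffunE -Rltb_opp //; apply/same_sign_Rltb/formA_neg_same_sign.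
Qed.

Lemma keyA_mixed x i j k : has_signs P x -> i \in P -> j \notin P ->
  keyA a n x (inr (i, j, k)) = false /\ keyA a n x (inr (j, i, k)) = true.
Proof.
move=> sx iP jP; have [? ?] := formA_mixed k sx iP jP.
by rewrite !ffunE; split; apply/RltbP; lra.
Qed.

Lemma keyA_log x y : sign_region x -> sign_region y ->
  keyA a n x = keyA a n y <->
  (keyC a _ (log_pos x), keyC a _ (log_neg x)) = (keyC a _ (log_pos y), keyC a _ (log_neg y)).
Proof.
move=> Sx Sy; have sx := sign_region_signs Sx; have sy := sign_region_signs Sy.
have keyC_diag m (w : vec m) l k : keyC a m w (l, l, k) = false.
  by rewrite ffunE /= eqxx; apply/RltbP; lra.
split => [xy | [xy_pos xy_neg]].
  congr pair; apply/ffunP => -[[l1 l2] k].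
    by rewrite -!keyA_pos // xy.
  have [-> | l12] := eqVneq l1 l2; first by rewrite !keyC_diag.
  by apply: negb_inj; rewrite -!keyA_neg // xy.
apply/ffunP => -[i | [[i j] k]].
  rewrite !ffunE /=; have := sx i; have := sy i; case: (i \in P) => yi xi;
  by case: RltbP => h1; case: RltbP => h2 //; lra.
case: (boolP (i \in P)) => iP; case: (boolP (j \in P)) => jP.
- have [l1 <-] := enum_val_onto iP; have [l2 <-] := enum_val_onto jP.
  by rewrite !keyA_pos // xy_pos.
- by rewrite (proj1 (keyA_mixed k sx iP jP)) (proj1 (keyA_mixed k sy iP jP)).
- by rewrite (proj2 (keyA_mixed k sx jP iP)) (proj2 (keyA_mixed k sy jP iP)).
- have [l1 <-] := enum_val_onto_compl iP; have [l2 <-] := enum_val_onto_compl jP.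
  have [-> | l12] := eqVneq l1 l2; first by rewrite !ffunE /= eqxx.
  by rewrite !keyA_neg // xy_neg.
Qed.

Lemma card_sign_region :
  #|key_image sign_region (keyA a n)| = (rC a #|P| * rC a #|~: P|)%N.
Proof.
rewrite !rC_key_image -cardsX -key_image_pair.
rewrite -(@key_image_transfer _ sign_region _ _ (fun x => (log_pos x, log_neg x))).
- by apply: card_key_image_equiv => x y Sx Sy; apply: keyA_log.
- by move=> x Sx; apply/(compl_A_log (sign_region_signs Sx)); case: Sx.
move=> [u v] [Cu Cv]; exists (exp_coords u v); last first.
  by rewrite log_pos_exp_coords log_neg_exp_coords.
have sx := has_signs_exp_coords u v.
split; last by apply/pos_set_signs => // i; have := sx i; case: (i \in P); lra.
by apply/(compl_A_log sx); rewrite log_pos_exp_coords log_neg_exp_coords.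
Qed.

End LogCoordinates.

Local Close Scope R_scope.

Lemma sum_card_subsets n (g : nat -> nat) :
  \sum_(P : {set 'I_n}) g #|P| = \sum_(i < n.+1) 'C(n, i) * g i.
Proof.
have card_lt (P : {set 'I_n}) : #|P| < n.+1 by rewrite ltnS -[n in _ <= n]card_ord max_card.
rewrite (partition_big (fun P : {set 'I_n} => inord #|P| : 'I_n.+1) predT) //=.
apply: eq_bigr => i _; rewrite (eq_bigr (fun _ => g i)); last first.
  by move=> P /eqP <-; rewrite inordK.
rewrite sum_nat_const -[n in 'C(n, _)]card_ord -card_draws; congr (_ * _).
by apply: eq_card => P; rewrite inE unfold_in /= inordK.
Qed.

Theorem mainTheorem11 (a : seq nat) :
  a <> [::] -> uniq a -> all (fun r => (2 <= r)%N) a ->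
  forall n : nat,
    rA a n = (\sum_(i < n.+1) 'C(n, i) * rC a i * rC a (n - i))%N.
Proof.
move=> a_neq0 _ a_ge2 n.
pose sign_of (k : {ffun FA a n -> bool}) : {set 'I_n} := [set i | ~~ k (inl i)].
rewrite rA_key_image (card_key_image_partition (pi := sign_of) (p := @pos_set n)); last first.
  move=> x [nz _]; apply/setP => i; rewrite !inE ffunE /=.
  by case: RltbP; case: RltbP => //= *; have := nz i; lra.
rewrite (eq_bigr (fun P : {set 'I_n} => rC a #|P| * rC a (n - #|P|))); last first.
  move=> P _; rewrite (card_sign_region a_neq0 a_ge2).
  by rewrite -[n in (n - _)%N](card_ord n) -(cardsC P) addKn.
rewrite (@sum_card_subsets n (fun i => (rC a i * rC a (n - i))%N)).
by apply: eq_bigr => i _; rewrite mulnA.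
Qed.
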